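(* Let $m$ be a positive integer and $q(x,y)=x^2-xy+y^2$. If the equation $m=q(x,y)$ has a solution $(x,y)\in\mathbb{Z}^2$, then it has a solution $(x',y')$ with $x',y'$ positive integers. *)

From Stdlib Require Import ZArith.
Open Scope Z_scope.
Definition q (x y : Z) : Z := x * x - x * y + y * y.

From Stdlib Require Import ZArith Lia.
Open Scope Z_scope.

(* q is invariant under (x, y) |-> (-x, -y), (y, x) and (x - y, x), and
   q x 0 = q x x.  Up to these moves every nonzero vector has positive
   coordinates: negate a vector in the closed negative quadrant, swap a vector
   in the second quadrant into the fourth, and send (x, y) with x > 0 > y to
   (x - y, x). *)

Definition positively_represented (m : Z) : Prop :=
  exists x y : Z, 0 < x /\ 0 < y /\ m = q x y.

Lemma q_opp (x y : Z) : q (- x) (- y) = q x y.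
Proof. unfold q; ring. Qed.

Lemma q_sym (x y : Z) : q y x = q x y.
Proof. unfold q; ring. Qed.

Lemma q_sub_l (x y : Z) : q (x - y) x = q x y.
Proof. unfold q; ring. Qed.

Lemma q_x0 (x : Z) : q x 0 = q x x.
Proof. unfold q; ring. Qed.

Lemma q_00 : q 0 0 = 0.
Proof. reflexivity. Qed.

Lemma positively_represented_nonneg (x y : Z) :
  0 <= x -> 0 <= y -> (x, y) <> (0, 0) -> positively_represented (q x y).
Proof.
  intros hx hy hxy.
  destruct (Z.eq_dec y 0) as [-> | hy0].
  - assert (hx0 : x <> 0) by congruence.
    exists x, x; rewrite q_x0; repeat split; lia.
  - destruct (Z.eq_dec x 0) as [-> | hx0].
    + exists y, y; rewrite <- q_sym, q_x0; repeat split; lia.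
    + exists x, y; repeat split; lia.
Qed.

Lemma positively_represented_opposite_signs (x y : Z) :
  0 < x -> y < 0 -> positively_represented (q x y).
Proof.
  intros hx hy; exists (x - y), x; rewrite q_sub_l; repeat split; lia.
Qed.

Lemma positively_represented_same_sign (x y : Z) :
  0 <= x * y -> (x, y) <> (0, 0) -> positively_represented (q x y).
Proof.
  intros hxy hnz.
  destruct (Z_le_dec 0 x) as [hx | hx], (Z_le_dec 0 y) as [hy | hy].
  - now apply positively_represented_nonneg.
  - rewrite <- q_opp; apply positively_represented_nonneg; try nia.
    intros [= ? ?]; lia.
  - rewrite <- q_opp; apply positively_represented_nonneg; try nia.
    intros [= ? ?]; lia.
  - rewrite <- q_opp; apply positively_represented_nonneg; try lia.
    intros [= ? ?]; lia.
Qed.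

Lemma positively_represented_q (x y : Z) :
  (x, y) <> (0, 0) -> positively_represented (q x y).
Proof.
  intros hnz.
  destruct (Z_le_dec 0 (x * y)) as [hxy | hxy].
  - now apply positively_represented_same_sign.
  - destruct (Z_lt_dec 0 x) as [hx | hx].
    + apply positively_represented_opposite_signs; nia.
    + assert (hy : 0 < y) by nia.
      rewrite <- q_sym; apply positively_represented_opposite_signs; nia.
Qed.

Theorem mainTheorem7 (m : Z) (hm : 0 < m) :
  (exists x y : Z, m = q x y) ->
  exists x' y' : Z, 0 < x' /\ 0 < y' /\ m = q x' y'.
Proof.
  intros [x [y ->]].
  apply positively_represented_q.
  intros hxy; injection hxy as -> ->.
  rewrite q_00 in hm; lia.
Qed.
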